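(* Consider the planar Problem B with $w=e=(0,1)$ (see context), on a closed interval $D\subset(-\pi/2,\pi/2)$. If $(\rho,C_r,C_b,\varphi)$ solves it, then $0\in D$, $\varphi(0)=0$, $d_b(0)=d_r(0)$, and $\rho'(0)=0$.
   Context: Planar setting: $x(t)=(\sin t,\cos t)$ for $t\in D$, a closed interval in $(-\pi/2,\pi/2)$; $e=(0,1)$; refractive indices $n_b>n_r>1$, outside vacuum; $\Phi_\kappa(s)=s-\sqrt{\kappa^2-1+s^2}$. For positive $\rho\in C^2(D)$, the curve $\rho(t)x(t)$ has outer unit normal $\nu_\rho(t)=\dfrac{(\rho\sin t-\rho'\cos t,\ \rho'\sin t+\rho\cos t)}{\sqrt{\rho^2+\rho'^2}}$. For $c\in\{r,b\}$ and a constant $C_c$: $m_c(t)=\frac1{n_c}\big(x(t)-\Phi_{n_c}(x(t)\cdot\nu_\rho(t))\nu_\rho(t)\big)$, $d_c(t)=\dfrac{C_c-\rho(t)(1-\cos t)}{n_c-e\cdot m_c(t)}$, $f_c(t)=\rho(t)x(t)+d_c(t)m_c(t)$; the curve $f_c$ refracts the color-$c$ ray $m_c(t)$ at $f_c(t)$ into $e$ by Snell's law (index $n_c$ to $1$). A solution of Problem B on $D$: positive $\rho\in C^2(D)$, constants $C_r,C_b$ with $d_r,d_b>0$ and $f_r,f_b$ regular curves, and a $C^1$ map $\varphi:D\to D$ with $f_r(t)=f_b(\varphi(t))$ for all $t\in D$. *)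

From Stdlib Require Import Reals Lra.
Open Scope R_scope.

Definition inD (a b t : R) : Prop := a <= t <= b.

Definition deriv_on (a b : R) (f f' : R -> R) : Prop :=
  forall t, inD a b t ->
    limit1_in (fun s => (f s - f t) / (s - t)) (fun s => inD a b s /\ s <> t) (f' t) t.

Definition cont_on (a b : R) (f : R -> R) : Prop :=
  forall t, inD a b t -> limit1_in f (inD a b) (f t) t.

Definition Phi (k s : R) : R := s - sqrt (k ^ 2 - 1 + s ^ 2).

(* Outer unit normal nu_rho(t), given rho and rho1 = rho'. *)
Definition nrm (rho rho1 : R -> R) (t : R) : R := sqrt (rho t ^ 2 + rho1 t ^ 2).
Definition nu1 (rho rho1 : R -> R) (t : R) : R :=
  (rho t * sin t - rho1 t * cos t) / nrm rho rho1 t.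
Definition nu2 (rho rho1 : R -> R) (t : R) : R :=
  (rho1 t * sin t + rho t * cos t) / nrm rho rho1 t.

Definition xnu (rho rho1 : R -> R) (t : R) : R :=
  sin t * nu1 rho rho1 t + cos t * nu2 rho rho1 t.

Definition m1 (n : R) (rho rho1 : R -> R) (t : R) : R :=
  (sin t - Phi n (xnu rho rho1 t) * nu1 rho rho1 t) / n.
Definition m2 (n : R) (rho rho1 : R -> R) (t : R) : R :=
  (cos t - Phi n (xnu rho rho1 t) * nu2 rho rho1 t) / n.

(* d_c(t) = (C_c - rho(t)(1 - cos t)) / (n_c - e . m_c(t)), e = (0,1) *)
Definition dd (n C : R) (rho rho1 : R -> R) (t : R) : R :=
  (C - rho t * (1 - cos t)) / (n - m2 n rho rho1 t).

Definition f1 (n C : R) (rho rho1 : R -> R) (t : R) : R :=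
  rho t * sin t + dd n C rho rho1 t * m1 n rho rho1 t.
Definition f2 (n C : R) (rho rho1 : R -> R) (t : R) : R :=
  rho t * cos t + dd n C rho rho1 t * m2 n rho rho1 t.

Definition regular_on (a b : R) (g1 g2 : R -> R) : Prop :=
  exists h1 h2 : R -> R,
    deriv_on a b g1 h1 /\ deriv_on a b g2 h2 /\ cont_on a b h1 /\ cont_on a b h2 /\
    forall t, inD a b t -> (h1 t <> 0 \/ h2 t <> 0).

(* Solution of the planar Problem B (w = e = (0,1)) on D = [a,b].
   rho1, rho2 are the first and second derivatives of rho; phi1 that of phi. *)
Definition solves_B (nr nb a b : R) (rho rho1 rho2 : R -> R) (Cr Cb : R)
  (phi phi1 : R -> R) : Prop :=
  (forall t, inD a b t -> 0 < rho t) /\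
  deriv_on a b rho rho1 /\ deriv_on a b rho1 rho2 /\ cont_on a b rho2 /\
  (forall t, inD a b t -> 0 < dd nr Cr rho rho1 t) /\
  (forall t, inD a b t -> 0 < dd nb Cb rho rho1 t) /\
  regular_on a b (f1 nr Cr rho rho1) (f2 nr Cr rho rho1) /\
  regular_on a b (f1 nb Cb rho rho1) (f2 nb Cb rho rho1) /\
  (forall t, inD a b t -> inD a b (phi t)) /\
  deriv_on a b phi phi1 /\ cont_on a b phi1 /\
  (forall t, inD a b t ->
     f1 nr Cr rho rho1 t = f1 nb Cb rho rho1 (phi t) /\
     f2 nr Cr rho rho1 t = f2 nb Cb rho rho1 (phi t)).

(* At a fixed point [tau] of [phi] the two refracting curves meet at the same
   parameter, so [d_r m_r = d_b m_b]; comparing the components of this vector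
   along and across [nu] shows that the two rays can only coincide when
   [rho'(tau) = 0], where both rays point along [x(tau)].  Each curve [f_c]
   satisfies the constant optical path equation
   [n_c |f_c - rho x| = e . f_c - rho + C_c]; differentiating it at [tau] (for the
   blue curve through [f_r = f_b o phi]) gives [e . f_r' = n_c (x . f_r')] for
   both indices, hence [f_r'(tau)] is horizontal and orthogonal to [x(tau)],
   which forces [sin tau = 0], i.e. [tau = 0]. *)
From Stdlib Require Import Reals Lra.
Open Scope R_scope.

Definition punctured (D : R -> Prop) (t s : R) : Prop := D s /\ s <> t.

Definition derive_within (D : R -> Prop) (f : R -> R) (t l : R) : Prop :=
  limit1_in (fun s => (f s - f t) / (s - t)) (punctured D t) l t.

Section DeriveWithin.

Variable D : R -> Prop.

Lemma derive_within_cont f t l :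
  derive_within D f t l -> limit1_in f (punctured D t) (f t) t.
Proof.
  intro Hf.
  pose proof (limit_minus _ _ _ _ _ _ (lim_x (punctured D t) t)
                (limit_free (fun _ => t) (punctured D t) t t)) as Hlin.
  pose proof (limit_plus _ _ _ _ _ _ (limit_free (fun _ => f t) (punctured D t) t t)
                (limit_mul _ _ _ _ _ _ Hf Hlin)) as H.
  replace (f t + l * (t - t)) with (f t) in H by ring.
  eapply limit1_ext; [|exact H].
  intros s [_ Hs]; simpl; field; lra.
Qed.

Lemma derive_within_const c t : derive_within D (fun _ => c) t 0.
Proof.
  apply (limit1_ext (fun _ => 0)); [|exact (limit_free (fun _ => 0) _ t t)].
  intros s [_ Hs]; field; lra.
Qed.

Lemma derive_within_id t : derive_within D (fun s => s) t 1.
Proof.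
  apply (limit1_ext (fun _ => 1)); [|exact (limit_free (fun _ => 1) _ t t)].
  intros s [_ Hs]; field; lra.
Qed.

Lemma derive_within_plus f g t A B :
  derive_within D f t A -> derive_within D g t B ->
  derive_within D (fun s => f s + g s) t (A + B).
Proof.
  intros Hf Hg; eapply limit1_ext; [|exact (limit_plus _ _ _ _ _ _ Hf Hg)].
  intros s [_ Hs]; simpl; field; lra.
Qed.

Lemma derive_within_minus f g t A B :
  derive_within D f t A -> derive_within D g t B ->
  derive_within D (fun s => f s - g s) t (A - B).
Proof.
  intros Hf Hg; eapply limit1_ext; [|exact (limit_minus _ _ _ _ _ _ Hf Hg)].
  intros s [_ Hs]; simpl; field; lra.
Qed.

Lemma derive_within_mult f g t A B :
  derive_within D f t A -> derive_within D g t B ->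
  derive_within D (fun s => f s * g s) t (A * g t + f t * B).
Proof.
  intros Hf Hg.
  pose proof (limit_plus _ _ _ _ _ _
                (limit_mul _ _ _ _ _ _ Hf (derive_within_cont _ _ _ Hg))
                (limit_mul _ _ _ _ _ _ (limit_free (fun _ => f t) _ t t) Hg)) as H.
  eapply limit1_ext; [|exact H].
  intros s [_ Hs]; simpl; field; lra.
Qed.

Lemma derive_within_sqr f t A :
  derive_within D f t A -> derive_within D (fun s => f s ^ 2) t (2 * f t * A).
Proof.
  intro Hf; pose proof (derive_within_mult _ _ _ _ _ Hf Hf) as H.
  replace (2 * f t * A) with (A * f t + f t * A) by ring.
  eapply limit1_ext; [|exact H]; intros s _; simpl; now rewrite !Rmult_1_r.
Qed.

(* The chain rule needs [psi t = t] so that both derivatives are taken within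
   the same set [D] at the same point; the difference quotient of [g] is
   extended by its limit at [t] to cover the parameters where [psi s = t]. *)
Lemma derive_within_comp g psi t L c :
  psi t = t -> (forall s, punctured D t s -> D (psi s)) ->
  derive_within D psi t c -> derive_within D g t L ->
  derive_within D (fun s => g (psi s)) t (L * c).
Proof.
  intros Hfix Hmap Hpsi Hg.
  set (G := fun u => if Req_EM_T u t then L else (g u - g t) / (u - t)).
  assert (HG : limit1_in G D L t).
  { intros eps Heps; destruct (Hg eps Heps) as [al [Hal H]].
    exists al; split; [exact Hal|]; intros u [Hu Hd]; unfold G.
    destruct (Req_EM_T u t); [simpl; unfold Rdist; rewrite Rminus_diag, Rabs_R0; lra|].
    apply H; repeat split; assumption. }
  pose proof (derive_within_cont _ _ _ Hpsi) as Hcont; rewrite Hfix in Hcont.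
  assert (HGpsi : limit1_in (fun s => G (psi s)) (punctured D t) L t).
  { apply (limit1_imp _ _ _ _ _ (fun s Hs => conj Hs (Hmap s Hs))).
    exact (limit_comp _ _ _ _ _ _ _ Hcont HG). }
  eapply limit1_ext; [|exact (limit_mul _ _ _ _ _ _ HGpsi Hpsi)].
  intros s [_ Hs]; simpl; unfold G; rewrite Hfix.
  destruct (Req_EM_T (psi s) t) as [Heq|Hne].
  - rewrite Heq; field_simplify; lra.
  - field; lra.
Qed.

Lemma derive_within_of_pt_lim f t l :
  derivable_pt_lim f t l -> derive_within D f t l.
Proof.
  intros H eps Heps; destruct (H eps Heps) as [del Hd].
  exists del; split; [apply cond_pos|]; intros s [[_ Hs] Hds]; simpl in *.
  unfold Rdist in *; assert (Hst : s - t <> 0) by lra.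
  specialize (Hd (s - t) Hst Hds); replace (t + (s - t)) with s in Hd by ring; exact Hd.
Qed.

Lemma derive_within_eq0 g t l :
  adhDa (punctured D t) t -> D t -> (forall s, D s -> g s = 0) ->
  derive_within D g t l -> l = 0.
Proof.
  intros Had Ht Hg Hl; apply (single_limit _ _ _ _ _ Had Hl).
  apply (limit1_ext (fun _ => 0)); [|exact (limit_free (fun _ => 0) _ t t)].
  intros s [Hs _]; rewrite !Hg by assumption; unfold Rdiv; ring.
Qed.

End DeriveWithin.

Ltac derive_within_step :=
  match goal with
  | |- derive_within ?D (fun _ => ?c) ?t _ => apply (derive_within_const D c t)
  | |- derive_within ?D (fun s => @?f s ^ 2) ?t _ => eapply (derive_within_sqr D f)
  | |- derive_within ?D (fun s => @?f s * @?g s) ?t _ => eapply (derive_within_mult D f g)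
  | |- derive_within ?D (fun s => @?f s + @?g s) ?t _ => eapply (derive_within_plus D f g)
  | |- derive_within ?D (fun s => @?f s - @?g s) ?t _ => eapply (derive_within_minus D f g)
  | |- derive_within ?D (fun s => ?h (?p s)) ?t _ =>
      eapply (derive_within_comp D h p); [assumption | assumption | |]
  | |- derive_within ?D _ ?t _ => eassumption
  end.
Ltac solve_derive_within := repeat derive_within_step.

Lemma interval_adh_punctured a b t :
  a < b -> inD a b t -> adhDa (punctured (inD a b) t) t.
Proof.
  unfold inD; intros Hab Ht alp Halp; simpl; unfold Rdist.
  pose proof (Rmin_l (alp / 2) ((b - a) / 2)); pose proof (Rmin_r (alp / 2) ((b - a) / 2)).
  assert (Hh : 0 < Rmin (alp / 2) ((b - a) / 2)) by (apply Rmin_pos; lra).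
  set (h := Rmin (alp / 2) ((b - a) / 2)) in *.
  destruct (Rle_lt_dec (t + h) b).
  - exists (t + h); replace (t + h - t) with h by ring.
    rewrite Rabs_right by lra; unfold punctured, inD; repeat split; lra.
  - exists (t - h); replace (t - h - t) with (- h) by ring.
    rewrite Rabs_Ropp, Rabs_right by lra; unfold punctured, inD; repeat split; lra.
Qed.

Lemma deriv_on_cont_on a b f f' : deriv_on a b f f' -> cont_on a b f.
Proof.
  intros Hf t Ht eps Heps.
  destruct (derive_within_cont _ _ _ _ (Hf t Ht) eps Heps) as [al [Hal H]].
  exists al; split; [exact Hal|]; intros s [Hs Hds].
  destruct (Req_dec s t) as [->|Hst].
  - simpl; unfold Rdist; rewrite Rminus_diag, Rabs_R0; lra.
  - apply H; split; [split|]; assumption.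
Qed.

Definition clamp (a b s : R) : R := Rmax a (Rmin b s).

Lemma clamp_in a b s : a <= b -> inD a b (clamp a b s).
Proof. unfold inD, clamp, Rmax, Rmin; intros; repeat destruct Rle_dec; lra. Qed.

Lemma clamp_id a b s : inD a b s -> clamp a b s = s.
Proof. unfold inD, clamp, Rmax, Rmin; intros; repeat destruct Rle_dec; lra. Qed.

Lemma clamp_lipschitz a b s x :
  a <= b -> Rabs (clamp a b s - clamp a b x) <= Rabs (s - x).
Proof.
  unfold clamp, Rmax, Rmin; intros.
  repeat destruct Rle_dec; unfold Rabs; repeat destruct Rcase_abs; lra.
Qed.

(* [phi] is only continuous relative to [D]; composing with the
   1-Lipschitz retraction [clamp] onto [D] gives a map continuous on all of
   [R], to which the intermediate value theorem applies. *)
Lemma cont_on_fixed_point a b phi :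
  a < b -> (forall t, inD a b t -> inD a b (phi t)) -> cont_on a b phi ->
  exists tau, inD a b tau /\ phi tau = tau.
Proof.
  intros Hab Hmap Hc.
  set (g := fun s => clamp a b s - phi (clamp a b s)).
  assert (Hg : continuity g).
  { intro x; apply continuity_pt_minus; intros eps Heps.
    - exists eps; split; [exact Heps|]; intros s [_ Hs]; simpl in *; unfold Rdist in *.
      eapply Rle_lt_trans; [apply clamp_lipschitz; lra | exact Hs].
    - destruct (Hc (clamp a b x) (clamp_in a b x ltac:(lra)) eps Heps) as [al [Hal H]].
      exists al; split; [exact Hal|]; intros s [_ Hs]; simpl in *.
      apply H; split; [apply clamp_in; lra|]; simpl; unfold Rdist in *.
      eapply Rle_lt_trans; [apply clamp_lipschitz; lra | exact Hs]. }
  assert (Ha : inD a b a) by (unfold inD; lra).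
  assert (Hb : inD a b b) by (unfold inD; lra).
  pose proof (Hmap a Ha) as Hpa; pose proof (Hmap b Hb) as Hpb; unfold inD in Hpa, Hpb.
  destruct (IVT_cor g a b Hg ltac:(lra)) as [z [Hz Hgz]].
  - unfold g; rewrite !clamp_id by assumption; nra.
  - exists z; split; [exact Hz|].
    unfold g in Hgz; rewrite clamp_id in Hgz by exact Hz; lra.
Qed.

Lemma Phi_root_sq n s : 1 < n -> sqrt (n ^ 2 - 1 + s ^ 2) ^ 2 = n ^ 2 - 1 + s ^ 2.
Proof. intro Hn; rewrite <- Rsqr_pow2, Rsqr_sqrt by nra; reflexivity. Qed.

Definition optical_path_defect (n C r th p1 p2 : R) : R :=
  n ^ 2 * ((p1 - r * sin th) ^ 2 + (p2 - r * cos th) ^ 2) - (p2 - r + C) ^ 2.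

Section Refraction.

Variables (rho rho1 : R -> R) (t : R).
Hypothesis rho_pos : 0 < rho t.

Lemma nrm_pos : 0 < nrm rho rho1 t.
Proof. apply sqrt_lt_R0; nra. Qed.

Lemma nrm_sq : nrm rho rho1 t ^ 2 = rho t ^ 2 + rho1 t ^ 2.
Proof. unfold nrm; rewrite <- Rsqr_pow2, Rsqr_sqrt by nra; reflexivity. Qed.

Lemma nu_unit : nu1 rho rho1 t ^ 2 + nu2 rho rho1 t ^ 2 = 1.
Proof.
  pose proof nrm_pos; pose proof nrm_sq; pose proof (sin2_cos2 t) as Hsc.
  unfold Rsqr in Hsc; unfold nu1, nu2.
  apply (Rmult_eq_reg_r (nrm rho rho1 t ^ 2)); [|nra].
  field_simplify; [nra | lra].
Qed.

Lemma xnu_eq : xnu rho rho1 t = rho t / nrm rho rho1 t.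
Proof.
  pose proof nrm_pos; pose proof (sin2_cos2 t) as Hsc; unfold Rsqr in Hsc.
  unfold xnu, nu1, nu2; field_simplify; [f_equal; nra | lra | lra].
Qed.

Variables (n C : R).
Hypothesis n_gt1 : 1 < n.

Lemma m_cross_nu :
  m1 n rho rho1 t * nu2 rho rho1 t - m2 n rho rho1 t * nu1 rho rho1 t
  = rho1 t / (nrm rho rho1 t * n).
Proof.
  pose proof nrm_pos; pose proof (sin2_cos2 t) as Hsc; unfold Rsqr in Hsc.
  transitivity ((sin t * nu2 rho rho1 t - cos t * nu1 rho rho1 t) / n);
    [unfold m1, m2; field; lra|].
  unfold nu1, nu2; field_simplify; [|lra|lra].
  replace (sin t ^ 2 * rho1 t + rho1 t * cos t ^ 2)
    with (rho1 t * (sin t * sin t + cos t * cos t)) by ring.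
  rewrite Hsc, Rmult_1_r; reflexivity.
Qed.

Lemma m_dot_nu :
  m1 n rho rho1 t * nu1 rho rho1 t + m2 n rho rho1 t * nu2 rho rho1 t
  = sqrt (n ^ 2 - 1 + xnu rho rho1 t ^ 2) / n.
Proof.
  pose proof nu_unit as Hu; unfold m1, m2, Phi, xnu in *.
  set (S := sqrt _); set (v1 := nu1 rho rho1 t) in *; set (v2 := nu2 rho rho1 t) in *.
  transitivity (((sin t * v1 + cos t * v2) * (1 - (v1 ^ 2 + v2 ^ 2))
                 + (v1 ^ 2 + v2 ^ 2) * S) / n); [field; lra|].
  rewrite Hu; field; lra.
Qed.

Lemma m_unit : m1 n rho rho1 t ^ 2 + m2 n rho rho1 t ^ 2 = 1.
Proof.
  pose proof nu_unit as Hu; pose proof (sin2_cos2 t) as Hsc; unfold Rsqr in Hsc.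
  pose proof (Phi_root_sq n (xnu rho rho1 t) n_gt1) as HS.
  unfold m1, m2, Phi, xnu in *.
  set (S := sqrt _) in *; set (v1 := nu1 rho rho1 t) in *; set (v2 := nu2 rho rho1 t) in *.
  set (X := sin t * v1 + cos t * v2) in *.
  apply (Rmult_eq_reg_r (n ^ 2)); [|nra].
  transitivity ((sin t ^ 2 + cos t ^ 2) - 2 * (X - S) * X + (X - S) ^ 2 * (v1 ^ 2 + v2 ^ 2));
    [unfold X; field; lra|].
  rewrite Hu; nra.
Qed.

Lemma m_eq_x : rho1 t = 0 -> m1 n rho rho1 t = sin t /\ m2 n rho rho1 t = cos t.
Proof.
  intro H0.
  assert (HN : nrm rho rho1 t = rho t).
  { unfold nrm; rewrite H0; replace (rho t ^ 2 + 0 ^ 2) with (rho t * rho t) by ring.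
    apply sqrt_square; lra. }
  assert (HX : xnu rho rho1 t = 1) by (rewrite xnu_eq, HN; field; lra).
  assert (HPhi : Phi n 1 = 1 - n).
  { unfold Phi; replace (n ^ 2 - 1 + 1 ^ 2) with (n * n) by ring.
    rewrite sqrt_square by lra; ring. }
  unfold m1, m2, nu1, nu2; rewrite HX, HPhi, HN, H0; split; field; lra.
Qed.

Lemma dd_mul :
  0 < dd n C rho rho1 t ->
  dd n C rho rho1 t * (n - m2 n rho rho1 t) = C - rho t * (1 - cos t).
Proof.
  unfold dd; intro Hd; destruct (Req_dec (n - m2 n rho rho1 t) 0) as [e|ne].
  - rewrite e, Rdiv_0_r in Hd; lra.
  - field; exact ne.
Qed.

(* The point [f_c] lies at distance [d_c] from [rho x] inside the lens and
   [d_c (n_c - e . m_c) = C_c - rho (1 - cos)] says that its optical path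
   [n_c d_c] equals [e . f_c - rho + C_c]. *)
Lemma optical_path :
  0 < dd n C rho rho1 t ->
  optical_path_defect n C (rho t) t (f1 n C rho rho1 t) (f2 n C rho rho1 t) = 0.
Proof.
  intro Hd; pose proof (dd_mul Hd) as Hmul; pose proof m_unit as Hu.
  unfold optical_path_defect, f1, f2.
  replace (rho t * cos t + dd n C rho rho1 t * m2 n rho rho1 t - rho t + C)
    with (n * dd n C rho rho1 t) by lra.
  transitivity ((n * dd n C rho rho1 t) ^ 2
                * (m1 n rho rho1 t ^ 2 + m2 n rho rho1 t ^ 2 - 1)); [ring|].
  rewrite Hu; ring.
Qed.

End Refraction.

(* At a parameter where the two curves meet, [d_r m_r = d_b m_b]; the component
   across [nu] forces [d_r / n_r = d_b / n_b] unless [rho' = 0], and then the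
   component along [nu] would give [n_r = n_b]. *)
Lemma rho1_eq0_of_common_point nr nb Cr Cb rho rho1 t :
  1 < nr -> nr < nb -> 0 < rho t ->
  0 < dd nr Cr rho rho1 t -> 0 < dd nb Cb rho rho1 t ->
  f1 nr Cr rho rho1 t = f1 nb Cb rho rho1 t ->
  f2 nr Cr rho rho1 t = f2 nb Cb rho rho1 t ->
  rho1 t = 0.
Proof.
  intros Hnr Hnb Hr Hdr Hdb E1 E2; unfold f1, f2 in E1, E2.
  pose proof (m_cross_nu rho rho1 t Hr nr Hnr) as Xr.
  pose proof (m_cross_nu rho rho1 t Hr nb ltac:(lra)) as Xb.
  pose proof (m_dot_nu rho rho1 t Hr nr Hnr) as Yr.
  pose proof (m_dot_nu rho rho1 t Hr nb ltac:(lra)) as Yb.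
  pose proof (nrm_pos rho rho1 t Hr) as HN.
  pose proof (Phi_root_sq nr (xnu rho rho1 t) Hnr) as Sr2.
  pose proof (Phi_root_sq nb (xnu rho rho1 t) ltac:(lra)) as Sb2.
  pose proof (sqrt_pos (nr ^ 2 - 1 + xnu rho rho1 t ^ 2)) as Sr0.
  pose proof (sqrt_pos (nb ^ 2 - 1 + xnu rho rho1 t ^ 2)) as Sb0.
  set (dr := dd nr Cr rho rho1 t) in *; set (db := dd nb Cb rho rho1 t) in *.
  set (N := nrm rho rho1 t) in *; set (X := xnu rho rho1 t) in *.
  set (Sr := sqrt (nr ^ 2 - 1 + X ^ 2)) in *; set (Sb := sqrt (nb ^ 2 - 1 + X ^ 2)) in *.
  assert (M1 : dr * m1 nr rho rho1 t = db * m1 nb rho rho1 t) by lra.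
  assert (M2 : dr * m2 nr rho rho1 t = db * m2 nb rho rho1 t) by lra.
  assert (Across : (dr / nr - db / nb) * (rho1 t / N) = 0).
  { transitivity (dr * (rho1 t / (N * nr)) - db * (rho1 t / (N * nb))); [field; lra|].
    rewrite <- Xr, <- Xb, !Rmult_minus_distr_l, <- !Rmult_assoc, M1, M2; ring. }
  assert (Along : dr * (Sr / nr) = db * (Sb / nb)).
  { rewrite <- Yr, <- Yb, Rmult_plus_distr_l, <- !Rmult_assoc, M1, M2; ring. }
  destruct (Req_dec (rho1 t) 0) as [e|Hne]; [exact e|exfalso].
  assert (Hk : dr / nr = db / nb).
  { apply Rmult_integral in Across; destruct Across as [A|A]; [lra|].
    exfalso; apply Hne; apply (Rmult_eq_reg_r (/ N)); [|apply Rinv_neq_0_compat; lra].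
    rewrite Rmult_0_l; exact A. }
  assert (HS : Sr = Sb).
  { apply (Rmult_eq_reg_l (dr / nr)); [|apply Rgt_not_eq, Rdiv_lt_0_compat; lra].
    rewrite Hk at 2; transitivity (dr * (Sr / nr)); [field; lra|].
    rewrite Along; field; lra. }
  assert (Sr ^ 2 = Sb ^ 2) by (rewrite HS; reflexivity); nra.
Qed.

Lemma common_point_geometry nr nb Cr Cb rho rho1 t :
  1 < nr -> nr < nb -> 0 < rho t -> 0 < cos t ->
  0 < dd nr Cr rho rho1 t -> 0 < dd nb Cb rho rho1 t ->
  f1 nr Cr rho rho1 t = f1 nb Cb rho rho1 t ->
  f2 nr Cr rho rho1 t = f2 nb Cb rho rho1 t ->
  let d := dd nr Cr rho rho1 t in
  rho1 t = 0 /\ dd nb Cb rho rho1 t = d /\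
  f1 nr Cr rho rho1 t = (rho t + d) * sin t /\ f2 nr Cr rho rho1 t = (rho t + d) * cos t /\
  Cr = d * (nr - cos t) + rho t * (1 - cos t) /\ Cb = d * (nb - cos t) + rho t * (1 - cos t).
Proof.
  intros Hnr Hnb Hr Hcos Hdr Hdb E1 E2 d; subst d.
  pose proof (rho1_eq0_of_common_point _ _ _ _ _ _ _ Hnr Hnb Hr Hdr Hdb E1 E2) as Hz.
  destruct (m_eq_x rho rho1 t Hr nr Hnr Hz) as [Mr1 Mr2].
  destruct (m_eq_x rho rho1 t Hr nb ltac:(lra) Hz) as [Mb1 Mb2].
  pose proof (dd_mul rho rho1 t nr Cr Hdr) as ECr; pose proof (dd_mul rho rho1 t nb Cb Hdb) as ECb.
  rewrite Mr2 in ECr; rewrite Mb2 in ECb.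
  assert (Hdeq : dd nb Cb rho rho1 t = dd nr Cr rho rho1 t).
  { unfold f2 in E2; rewrite Mr2, Mb2 in E2; apply (Rmult_eq_reg_r (cos t)); lra. }
  rewrite Hdeq in ECb; unfold f1, f2; rewrite Mr1, Mr2.
  repeat split; [exact Hz | exact Hdeq | ring | ring | lra | lra].
Qed.

(* Differentiating the optical path equation at a point where the incident ray
   is [x(tau)] and [rho'(tau) = 0]: the terms coming from [rho x] are
   orthogonal to [x(tau)], so the reparametrisation [psi] drops out. *)
Lemma optical_path_tangent (D : R -> Prop) n C d (r psi F1 F2 : R -> R) tau c H1 H2 :
  adhDa (punctured D tau) tau -> D tau -> 0 < n -> 0 < d ->
  (forall s, D s -> D (psi s)) -> psi tau = tau ->
  derive_within D psi tau c -> derive_within D r tau 0 ->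
  derive_within D F1 tau H1 -> derive_within D F2 tau H2 ->
  F1 tau = (r tau + d) * sin tau -> F2 tau = (r tau + d) * cos tau ->
  C = d * (n - cos tau) + r tau * (1 - cos tau) ->
  (forall s, D s -> optical_path_defect n C (r (psi s)) (psi s) (F1 s) (F2 s) = 0) ->
  H2 = n * (sin tau * H1 + cos tau * H2).
Proof.
  intros Had Htau Hn Hd Hmap Hfix Hpsi Hr HF1 HF2 E1 E2 EC Hopl.
  assert (Hmap' : forall s, punctured D tau s -> D (psi s)) by (intros s [Hs _]; auto).
  pose proof (derive_within_of_pt_lim D _ _ _ (derivable_pt_lim_sin tau)) as Hsin.
  pose proof (derive_within_of_pt_lim D _ _ _ (derivable_pt_lim_cos tau)) as Hcos.
  unfold optical_path_defect in Hopl.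
  eassert (Hder : derive_within D (fun s =>
      n ^ 2 * ((F1 s - r (psi s) * sin (psi s)) ^ 2 + (F2 s - r (psi s) * cos (psi s)) ^ 2)
      - (F2 s - r (psi s) + C) ^ 2) tau _) by solve_derive_within.
  pose proof (derive_within_eq0 _ _ _ _ Had Htau Hopl Hder) as Hz.
  rewrite Hfix, E1, E2, EC in Hz.
  apply (Rmult_eq_reg_l (2 * n * d)); [nra | apply Rgt_not_eq; nra].
Qed.

Lemma sin_eq0_of_tangent n n' s c H1 H2 :
  n <> n' -> H2 = n * (s * H1 + c * H2) -> H2 = n' * (s * H1 + c * H2) ->
  H1 <> 0 \/ H2 <> 0 -> s = 0.
Proof.
  intros Hnn' Hr Hb Hreg.
  assert (Hdot : s * H1 + c * H2 = 0).
  { apply (Rmult_eq_reg_l (n - n')); [lra | lra]. }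
  assert (H20 : H2 = 0) by (rewrite Hdot, Rmult_0_r in Hr; exact Hr).
  destruct Hreg as [H10|]; [|contradiction].
  rewrite H20, Rmult_0_r, Rplus_0_r in Hdot.
  apply (Rmult_eq_reg_r H1); [lra | exact H10].
Qed.

Theorem lemma5p4 (nr nb a b : R) (rho rho1 rho2 : R -> R) (Cr Cb : R)
  (phi phi1 : R -> R) :
  1 < nr -> nr < nb ->
  - (PI / 2) < a -> a < b -> b < PI / 2 ->
  solves_B nr nb a b rho rho1 rho2 Cr Cb phi phi1 ->
  inD a b 0 /\ phi 0 = 0 /\
  dd nb Cb rho rho1 0 = dd nr Cr rho rho1 0 /\ rho1 0 = 0.
Proof.
  intros Hnr Hnb Ha Hab Hb
    [Hpos [Hdrho [_ [_ [Hdr [Hdb [[h1 [h2 [Hh1 [Hh2 [_ [_ Hreg]]]]]] [_ [Hmap [Hdphi [_ Hf]]]]]]]]]]].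
  destruct (cont_on_fixed_point a b phi Hab Hmap (deriv_on_cont_on _ _ _ _ Hdphi))
    as [tau [Htau Hfix]].
  destruct (Hf tau Htau) as [E1 E2]; rewrite Hfix in E1, E2.
  assert (Hcos : 0 < cos tau) by (apply cos_gt_0; unfold inD in Htau; lra).
  destruct (common_point_geometry _ _ _ _ _ _ _ Hnr Hnb (Hpos tau Htau) Hcos
              (Hdr tau Htau) (Hdb tau Htau) E1 E2) as [Hz [Hdeq [F1 [F2 [ECr ECb]]]]].
  assert (Hrho : derive_within (inD a b) rho tau 0) by (rewrite <- Hz; exact (Hdrho tau Htau)).
  pose proof (interval_adh_punctured a b tau Hab Htau) as Had.
  pose proof (optical_path_tangent _ nr Cr _ rho (fun s => s) _ _ tau 1 _ _ Had Htau
    ltac:(lra) (Hdr tau Htau) (fun s Hs => Hs) eq_refl (derive_within_id _ tau) Hrho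
    (Hh1 tau Htau) (Hh2 tau Htau) F1 F2 ECr
    (fun s Hs => optical_path rho rho1 s (Hpos s Hs) nr Cr Hnr (Hdr s Hs))) as Tr.
  assert (Hopl : forall s, inD a b s -> optical_path_defect nb Cb (rho (phi s)) (phi s)
                   (f1 nr Cr rho rho1 s) (f2 nr Cr rho rho1 s) = 0).
  { intros s Hs; destruct (Hf s Hs) as [-> ->]; pose proof (Hmap s Hs) as Hps.
    exact (optical_path rho rho1 _ (Hpos _ Hps) nb Cb ltac:(lra) (Hdb _ Hps)). }
  pose proof (optical_path_tangent _ nb Cb _ rho phi _ _ tau _ _ _ Had Htau
    ltac:(lra) (Hdr tau Htau) Hmap Hfix (Hdphi tau Htau) Hrho
    (Hh1 tau Htau) (Hh2 tau Htau) F1 F2 ECb Hopl) as Tb.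
  pose proof (sin_eq0_of_tangent nr nb _ _ _ _ ltac:(lra) Tr Tb (Hreg tau Htau)) as Hsin.
  assert (H0 : tau = 0).
  { unfold inD in Htau; apply sin_inj; [lra | lra | rewrite sin_0; exact Hsin]. }
  subst tau; split; [exact Htau | split; [exact Hfix | split; [exact Hdeq | exact Hz]]].
Qed.
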